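(* Let $\delta=x^{\mathbf d}f(\theta)$ be a homogeneous differential operator of degree $\mathbf d$ with $\mathbf d\neq\mathbf 0$, $-\mathbf d\in S$, $\mathbf d=q\mathbf e$ ($q\in\mathbb Z_{\ge1}$, $\mathbf e$ primitive). Suppose there is a subset $\mathcal B\subseteq\mathbb N^n$ compatible with $\mathbf d$ such that (1) $\operatorname{val}(\mathbf a)>-\infty$ for all $\mathbf a\in W_{\mathcal B}$; (2) for all $\mathbf a\in V'_{\mathrm{mon}}(f)\cap W_{\mathcal B}$ and all $i=0,\dots,q-1$, $\mathbf a-i\mathbf e\in V_{\mathrm{mon}}(f)$; (3) for all $\mathbf a,\mathbf b\in V'_{\mathrm{mon}}(f)\cap W_{\mathcal B}$, $\mathbf a-\mathbf b\notin S-\mathbf e$. Then $\delta$ fixes the ideal $I=(x^{\mathbf a}\mid \mathbf a\in V'_{\mathrm{mon}}(f)\cap W_{\mathcal B})$, and $\operatorname{Exp} I=\{\mathbf b\in W_{\mathcal B}:\operatorname{pval}(\mathbf b)\ge 0\}$.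
   Context: Standing notation. Fix $d\ge 1$. Let $\sigma\subseteq\mathbb R^d$ be a full-dimensional, strongly convex rational polyhedral cone, so $\sigma^\vee$ is full-dimensional and strongly convex. $S=\sigma^\vee\cap\mathbb Z^d$, $R=\mathbb C[S]$ with monomial basis $x^{\mathbf a}$, $\mathbf a\in S$. $h_1,\dots,h_n$ are the primitive support functions of the facets of $\sigma^\vee$, so $S=\{\mathbf a\in\mathbb Z^d:h_i(\mathbf a)\ge0\ \forall i\}$. $(g,m)!=\prod_{j=0}^m(g-j)$ for $m\ge0$, $=1$ for $m<0$; $H_{\mathbf d}=\prod_i(h_i,h_i(-\mathbf d)-1)!$. For $f$ divisible by $H_{\mathbf d}$, $\delta=x^{\mathbf d}f(\theta)$ acts by $\delta(x^{\mathbf a})=f(\mathbf a)x^{\mathbf a+\mathbf d}$. $\operatorname{Exp} I=\{\mathbf a\in S:x^{\mathbf a}\in I\}$; $I$ is $\delta$-fixed if $\delta(I)=I$. $V_{\mathrm{mon}}(f)=\{\mathbf a\in\mathbb Z^d:f(\mathbf a)=0\}$; $S-\mathbf e=\{\mathbf s-\mathbf e:\mathbf s\in S\}$. For $\mathbf a\in\mathbb Z^d$, $\operatorname{val}(\mathbf a)=\inf\{t\in\mathbb R:\mathbf a+t\mathbf d\in V_{\mathrm{mon}}(f)\}\in\mathbb R\cup\{\pm\infty\}$ ($\inf\emptyset=+\infty$). When $\operatorname{val}(\mathbf a)$ is finite, $\operatorname{pval}(\mathbf a)=\max\{t\in[\operatorname{val}(\mathbf a),\operatorname{val}(\mathbf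 a)+1):\mathbf a+t\mathbf d\in V_{\mathrm{mon}}(f)\}$ and $\operatorname{vpt}(\mathbf a)=\mathbf a+\operatorname{pval}(\mathbf a)\mathbf d$. $V'_{\mathrm{mon}}(f)=\{\operatorname{vpt}(\mathbf a):\mathbf a\in\mathbb Z^d,\ \operatorname{val}(\mathbf a)\text{ finite}\}$. A tuple $\beta\in\mathbb N^n$ is compatible with $\mathbf d$ if for every $i$, $\beta_i=0$ or $h_i(\mathbf d)=0$; $\mathcal B\subseteq\mathbb N^n$ is compatible with $\mathbf d$ if each element is. $W_\beta=\{\mathbf a\in S: h_i(\mathbf a)\ge\beta_i\ \forall i\}$, $W_{\mathcal B}=\bigcup_{\beta\in\mathcal B}W_\beta$. *)

(* C is modelled as  R[i] = complex R  for an arbitrary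
   R : realType (every realType is a model of the real numbers). *)
From HB Require Import structures.
From mathcomp Require Import all_boot all_order all_algebra.
From mathcomp Require Import reals.
From mathcomp Require Import complex.
From mathcomp Require Import mpoly.
Set Implicit Arguments. Unset Strict Implicit. Unset Printing Implicit Defensive.
Import Order.TTheory GRing.Theory Num.Theory.
Local Open Scope ring_scope.

Section Defs.
Variables (R : realType) (dm n : nat).
Local Notation C := (R[i])%C.
Local Notation vec := 'rV[int]_dm.

Definition hv (hh a : vec) : int := \sum_(k < dm) hh 0 k * a 0 k.

Definition primitive (e : vec) : Prop :=
  e != 0 /\ forall (m : int) (c : vec), e = m *: c -> `|m| = 1.

(* h_1..h_n are the primitive support functions of the facets of a
   full-dimensional, strongly convex rational polyhedral cone
   sigma^vee = {x | h_i(x) >= 0 for all i}, listed without repetition. *)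
Definition facet_data (h : 'I_n -> vec) : Prop :=
  [/\ forall i, primitive (h i),
      exists a : vec, forall i, 0 < hv (h i) a,
      (* strongly convex (contains no line) *)
      forall a : vec, (forall i, hv (h i) a = 0) -> a = 0 &
      (* irredundant: each inequality defines a facet *)
      forall i, exists a : vec, hv (h i) a < 0 /\ forall j, j != i -> 0 <= hv (h j) a].

Definition inS (h : 'I_n -> vec) (a : vec) : Prop := forall i, 0 <= hv (h i) a.

Definition hpoly (hh : vec) : {mpoly C[dm]} := \sum_(k < dm) ((hh 0 k)%:~R)%:MP * 'X_k.

Definition falling (g : {mpoly C[dm]}) (m : int) : {mpoly C[dm]} :=
  if m < 0 then 1 else \prod_(j < `|m|.+1) (g - (j%:R)%:MP).

Definition Hd (h : 'I_n -> vec) (d : vec) : {mpoly C[dm]} :=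
  \prod_(i < n) falling (hpoly (h i)) (hv (h i) (- d) - 1).

(* delta = x^d f(theta) is a homogeneous differential operator of degree d *)
Definition homog_op (h : 'I_n -> vec) (d : vec) (f : {mpoly C[dm]}) : Prop :=
  exists g : {mpoly C[dm]}, f = Hd h d * g.

Definition evalZ (f : {mpoly C[dm]}) (a : vec) : C := f.@[fun k => (a 0 k)%:~R].

Definition Vmon (f : {mpoly C[dm]}) (a : vec) : Prop := evalZ f a = 0.

Definition onLine (a d : vec) (t : R) (c : vec) : Prop :=
  forall k, ((c 0 k)%:~R : R) = (a 0 k)%:~R + t * (d 0 k)%:~R.

Definition Tset (f : {mpoly C[dm]}) (d a : vec) (t : R) : Prop :=
  exists c : vec, onLine a d t c /\ Vmon f c.

(* val(a) > -oo, i.e. the set above is bounded below (inf of the empty set is +oo) *)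
Definition val_gt_minf (f : {mpoly C[dm]}) (d a : vec) : Prop :=
  exists lb : R, forall t, Tset f d a t -> lb <= t.

Definition val_is (f : {mpoly C[dm]}) (d a : vec) (v : R) : Prop :=
  (forall t, Tset f d a t -> v <= t) /\
  (forall lb, (forall t, Tset f d a t -> lb <= t) -> lb <= v).

Definition pval_is (f : {mpoly C[dm]}) (d a : vec) (p : R) : Prop :=
  exists v, [/\ val_is f d a v, v <= p < v + 1, Tset f d a p &
            forall t, Tset f d a t -> v <= t < v + 1 -> t <= p].

(* b in V'_mon(f): b = vpt(a) for some a with val(a) finite *)
Definition inVp (f : {mpoly C[dm]}) (d b : vec) : Prop :=
  exists (a : vec) (p : R), pval_is f d a p /\ onLine a d p b.

Definition compatible (h : 'I_n -> vec) (d : vec) (B : ('I_n -> nat) -> Prop) : Prop :=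
  forall beta, B beta -> forall i, beta i = 0%N \/ hv (h i) d = 0.

Definition inW (h : 'I_n -> vec) (beta : 'I_n -> nat) (a : vec) : Prop :=
  inS h a /\ forall i, (beta i)%:Z <= hv (h i) a.

Definition inWB (h : 'I_n -> vec) (B : ('I_n -> nat) -> Prop) (a : vec) : Prop :=
  exists beta, B beta /\ inW h beta a.

Definition inSminus (h : 'I_n -> vec) (e c : vec) : Prop :=
  exists s, inS h s /\ c = s - e.

(* an element of C[S] is a finitely supported coefficient function Z^d -> C with
   support in S; finite formal sums are written as lists of terms (c, a) = c x^a *)
Definition term := (C * vec)%type.
Definition coefL (p : seq term) (b : vec) : C := \sum_(t <- p | t.2 == b) t.1.
Definition inRL (h : 'I_n -> vec) (p : seq term) : Prop := forall t, t \in p -> inS h t.2.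
Definition mulL (p q : seq term) : seq term :=
  [seq (t.1 * u.1, t.2 + u.2) | t <- p, u <- q].
Definition monoL (a : vec) : seq term := [:: (1, a)].

Definition inIdeal (h : 'I_n -> vec) (G : vec -> Prop) (F : vec -> C) : Prop :=
  exists rs : seq (seq term * vec),
    (forall rg, rg \in rs -> G rg.2 /\ inRL h rg.1) /\
    forall b, F b = coefL (flatten [seq mulL rg.1 (monoL rg.2) | rg <- rs]) b.

(* delta = x^d f(theta):  delta(sum_a F(a) x^a) = sum_a f(a) F(a) x^(a+d) *)
Definition deltaF (f : {mpoly C[dm]}) (d : vec) (F : vec -> C) : vec -> C :=
  fun c => evalZ f (c - d) * F (c - d).

Definition delta_fixed (h : 'I_n -> vec) (f : {mpoly C[dm]}) (d : vec) (G : vec -> Prop) : Prop :=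
  (forall F, inIdeal h G F -> inIdeal h G (deltaF f d F)) /\
  (forall F, inIdeal h G F -> exists F', inIdeal h G F' /\ forall c, F c = deltaF f d F' c).

Definition monoF (a : vec) : vec -> C := fun c => (c == a)%:R.

Definition inExp (h : 'I_n -> vec) (G : vec -> Prop) (a : vec) : Prop :=
  inS h a /\ inIdeal h G (monoF a).

End Defs.

From HB Require Import structures.
From mathcomp Require Import all_boot all_order all_algebra.
From mathcomp Require Import reals complex mpoly.
From mathcomp Require Import zify ring lra.
Set Implicit Arguments. Unset Strict Implicit. Unset Printing Implicit Defensive.
Import Order.TTheory GRing.Theory Num.Theory.
Local Open Scope ring_scope.

(* Since d = q e with e primitive, the lattice points of the line b + R d are the
   points b + s e (s in Z), so q pval(b) is an integer s and b + s e is the vertex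
   vpt(b) in V'_mon(f).  By (2) the q lattice points below a vertex are zeros of f,
   so f(a) <> 0 forces pval(a) >= 1, hence pval(a + d) = pval(a) - 1 >= 0; a + d
   stays in S because the factor H_d of f vanishes at the points a of S with
   a + d outside S.  By (3) the points of W_B with pval >= 0 are stable under adding
   S.  Hence the exponents of I are exactly the points of W_B with pval >= 0, and
   delta, which sends x^a to f(a) x^(a+d), maps the monomials of I onto the
   monomials of I up to nonzero scalars. *)

Lemma exists_int_min (P : pred int) (lb z : int) :
  P z -> (forall s, P s -> lb <= s) -> exists2 s0, P s0 & forall s, P s -> s0 <= s.
Proof.
move=> Pz Plb.
have exP : exists k : nat, P (lb + k%:Z).
  by exists `|z - lb|%N; rewrite gez0_abs ?subr_ge0 ?Plb // subrKC.
case: (ex_minnP exP) => k Pk kmin; exists (lb + k%:Z) => // s Ps.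
have := kmin `|s - lb|%N; rewrite gez0_abs ?subr_ge0 ?Plb // subrKC => /(_ Ps).
have := Plb _ Ps; lia.
Qed.

Lemma exists_int_max (P : pred int) (ub z : int) :
  P z -> (forall s, P s -> s <= ub) -> exists2 s1, P s1 & forall s, P s -> s <= s1.
Proof.
move=> Pz Pub.
have [||s0 Ps0 s0min] := @exists_int_min (fun s => P (- s)) (- ub) (- z).
- by rewrite opprK.
- by move=> s /Pub; rewrite lerNl.
by exists (- s0) => // s Ps; rewrite lerNr; apply: s0min; rewrite opprK.
Qed.

Section LinearForm.
Variable dm : nat.
Local Notation vec := 'rV[int]_dm.

Lemma hvD (hh a b : vec) : hv hh (a + b) = hv hh a + hv hh b.
Proof. by rewrite /hv -big_split; apply: eq_bigr => k _; rewrite mxE mulrDr. Qed.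

Lemma hvZ (hh a : vec) (s : int) : hv hh (s *: a) = s * hv hh a.
Proof. by rewrite /hv mulr_sumr; apply: eq_bigr => k _; rewrite mxE mulrCA. Qed.

Lemma hvN (hh a : vec) : hv hh (- a) = - hv hh a.
Proof. by rewrite -scaleN1r hvZ mulN1r. Qed.

Lemma hvB (hh a b : vec) : hv hh (a - b) = hv hh a - hv hh b.
Proof. by rewrite hvD hvN. Qed.

(* r is rational, and its denominator divides every coordinate of e. *)
Lemma primitive_scale_int (R : realType) (e : vec) (r : R) : primitive e ->
  (forall k, exists m : int, r * (e 0 k)%:~R = m%:~R) -> exists z : int, r = z%:~R.
Proof.
case=> enz prim Hm.
have [k0 ek0] : exists k0, e 0 k0 != 0.
  apply/existsP; apply: contraR enz => /existsPn H; apply/eqP/rowP => k.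
  by rewrite mxE; apply/eqP; move: (H k); rewrite negbK.
have [m0 Hm0] := Hm k0.
pose x : rat := m0%:~R / (e 0 k0)%:~R.
have ek0R : ((e 0 k0)%:~R : R) != 0 by rewrite intr_eq0.
have ek0Q : ((e 0 k0)%:~R : rat) != 0 by rewrite intr_eq0.
have Hx k : exists mk : int, x * (e 0 k)%:~R = mk%:~R /\ r * (e 0 k)%:~R = mk%:~R.
  have [mk Hmk] := Hm k; exists mk; split => //.
  have E : mk * e 0 k0 = m0 * e 0 k.
    by apply: (@intr_inj R); rewrite !rmorphM /= -Hmk -Hm0; ring.
  rewrite /x; apply: (mulIf ek0Q); rewrite mulrAC divfK // -!rmorphM /=.
  by rewrite -E.
have den_dvd k : e 0 k \in dvdz (denq x).
  have [mk [Hk _]] := Hx k.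
  have E : numq x * e 0 k = mk * denq x.
    by apply: (@intr_inj rat); rewrite !rmorphM /= numqE -Hk; ring.
  have cop : coprimez (denq x) (numq x).
    by rewrite coprimez_sym coprimezE coprime_num_den.
  by rewrite -(Gauss_dvdzr (e 0 k) cop) E; apply/dvdzP; exists mk.
have ed : e = (denq x) *: \row_k divz (e 0 k) (denq x).
  by apply/rowP => k; rewrite !mxE mulrC divzK.
have := prim _ _ ed; rewrite ger0_norm ?(ltW (denq_gt0 x)) // => den1.
exists (numq x).
have [mk [Hk Hr]] := Hx k0.
have E : numq x * e 0 k0 = mk.
  by apply: (@intr_inj rat); rewrite !rmorphM /= numqE den1 mulr1 -Hk.
by apply: (mulIf ek0R); rewrite Hr -E rmorphM.
Qed.

End LinearForm.

Section MonomialIdeal.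
Variables (R : realType) (dm n : nat) (h : 'I_n -> 'rV[int]_dm).
Local Notation vec := 'rV[int]_dm.
Local Notation C := (R[i])%C.

Lemma inS_add a b : inS h a -> inS h b -> inS h (a + b).
Proof. by move=> Sa Sb i; rewrite hvD addr_ge0. Qed.

Definition multiple_of (G : vec -> Prop) (c : vec) : Prop :=
  exists g, G g /\ inS h (c - g).

Local Notation terms rs := (flatten [seq mulL rg.1 (monoL R rg.2) | rg <- rs]).

Lemma ideal_combination G (F : vec -> C) (l : seq vec) :
  uniq l -> (forall c, c \in l -> multiple_of G c) ->
  exists rs, (forall rg, rg \in rs -> G rg.2 /\ inRL h rg.1) /\
    forall c, coefL (terms rs) c = if c \in l then F c else 0.
Proof.
elim: l => [|x l IH] /=.
  by move=> _ _; exists [::]; split=> // c; rewrite /coefL big_nil.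
move=> /andP[xnl ul] Ml.
have [g [Gg Sxg]] := Ml x (mem_head _ _).
have [rs [Hrs Hc]] := IH ul (fun c cl => Ml c ltac:(by rewrite in_cons cl orbT)).
exists (([:: (F x, x - g)], g) :: rs); split.
  move=> rg; rewrite in_cons => /orP[/eqP -> | /Hrs //]; split=> //.
  by move=> t; rewrite mem_seq1 => /eqP ->.
move=> c; rewrite /coefL /= big_cons /=.
have := Hc c; rewrite /coefL => ->.
rewrite subrK mulr1 in_cons.
have [<-|xc] := eqVneq x c; first by rewrite ?eqxx (negbTE xnl) addr0.
by rewrite ?(eq_sym c) ?(negbTE xc).
Qed.

Lemma inIdealP G (F : vec -> C) : inIdeal h G F <->
  exists l : seq vec, forall c, F c != 0 -> c \in l /\ multiple_of G c.
Proof.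
split.
  case=> rs [Hrs HF].
  have mem_terms t : t \in terms rs -> multiple_of G t.2.
    move/flatten_mapP => [rg rgin] /allpairsP [[u w] [uin win ->]] /=.
    move: win => /=; rewrite /monoL mem_seq1 => /eqP -> /=.
    have [Gg Srg] := Hrs _ rgin.
    by exists rg.2; split => //; rewrite addrK; apply: Srg.
  exists (map snd (terms rs)) => c; rewrite HF /coefL.
  have [/hasP [t tin /eqP tc] _ | /hasPn Hn] := boolP (has (fun t => t.2 == c) (terms rs)).
    by split; [apply/mapP; exists t | rewrite -tc; apply: mem_terms].
  rewrite big1_seq ?eqxx // => t /andP[tc tin].
  by have := Hn t tin; rewrite tc.
case=> l Hl.
pose l' := undup (filter (fun c => F c != 0) l).
have Ml c : c \in l' -> multiple_of G c by rewrite mem_undup mem_filter => /andP[/Hl[]].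
have [rs [Hrs Hc]] := ideal_combination F (undup_uniq _) Ml.
exists rs; split=> // c; rewrite Hc.
case: ifP => // cl; apply/eqP; apply: contraFT cl => Fc.
by rewrite mem_undup mem_filter Fc; case: (Hl c Fc).
Qed.

Lemma inExpP G b : (forall g, G g -> inS h g) -> inExp R h G b <-> multiple_of G b.
Proof.
move=> GS; split.
  case=> _ /inIdealP [l /(_ b)].
  by rewrite /monoF eqxx oner_neq0 => /(_ isT) [].
move=> Mb; split.
  by case: Mb => g [/GS Sg Sbg]; rewrite -(subrK g b); exact: inS_add.
apply/inIdealP; exists [:: b] => c; rewrite /monoF.
have [-> _|_] := eqVneq c b; last by rewrite eqxx.
by rewrite mem_seq1.
Qed.

Lemma delta_fixed_shift G (f : {mpoly C[dm]}) (d : vec) :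
  (forall a, multiple_of G a -> evalZ f a != 0 -> multiple_of G (a + d)) ->
  (forall b, multiple_of G b -> evalZ f (b - d) != 0 /\ multiple_of G (b - d)) ->
  delta_fixed h f d G.
Proof.
move=> up down; split.
- move=> F /inIdealP [l Hl]; apply/inIdealP; exists (map (fun c => c + d) l) => c.
  rewrite /deltaF mulf_eq0 negb_or => /andP[fz Fz].
  have [cl Mc] := Hl _ Fz; split; first by apply/mapP; exists (c - d); rewrite ?subrK.
  by have := up _ Mc fz; rewrite subrK.
- move=> F /inIdealP [l Hl].
  exists (fun c => F (c + d) / evalZ f c); split.
    apply/inIdealP; exists (map (fun c => c - d) l) => c.
    rewrite mulf_eq0 negb_or => /andP[Fz _].
    have [cl Mc] := Hl _ Fz; split; first by apply/mapP; exists (c + d); rewrite ?addrK.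
    by have := (down _ Mc).2; rewrite addrK.
  move=> c; rewrite /deltaF subrK.
  have [->|Fc] := eqVneq (F c) 0; first by rewrite mul0r mulr0.
  have [_ Mc] := Hl _ Fc; have [fz _] := down _ Mc.
  by rewrite mulrC divfK.
Qed.

End MonomialIdeal.

Section Homogeneous.
Variables (R : realType) (dm n : nat) (h : 'I_n -> 'rV[int]_dm) (d : 'rV[int]_dm).
Variable f : {mpoly (R[i])%C[dm]}.
Hypothesis homog_f : homog_op h d f.
Local Notation vec := 'rV[int]_dm.

Lemma meval_hpoly (hh c : vec) :
  meval (fun k => ((c 0 k)%:~R : (R[i])%C)) (hpoly R hh) = (hv hh c)%:~R.
Proof.
rewrite /hpoly raddf_sum /hv rmorph_sum; apply: eq_bigr => k _ /=.
by rewrite mevalM mevalC mevalXU rmorphM.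
Qed.

(* If h_i(c + d) < 0 <= h_i(c), then h_i(c) is one of the roots 0, ..., h_i(-d) - 1
   of the factor (h_i, h_i(-d) - 1)! of H_d. *)
Lemma homog_op_eval_eq0 (c : vec) :
  inS h c -> (exists i, hv (h i) (c + d) < 0) -> evalZ f c = 0.
Proof.
move=> Sc [i Hi]; case: homog_f => g ->.
rewrite /evalZ mevalM /Hd (big_morph _ (mevalM _) (meval1 _)) (bigD1 i) //=.
set x := hv (h i) c.
have x0 : 0 <= x := Sc i.
rewrite hvD in Hi; rewrite /falling.
have -> : (hv (h i) (- d) - 1 < 0) = false by apply/negbTE; rewrite -leNgt hvN; lia.
have xm : (`|x| < `|hv (h i) (- d) - 1|.+1)%N by rewrite hvN; lia.
rewrite (big_morph _ (mevalM _) (meval1 _)) (bigD1 (Ordinal xm)) //=.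
rewrite mevalB mevalC meval_hpoly -/x.
have -> : (x%:~R : (R[i])%C) = (`|x|%N)%:R by rewrite -{1}(gez0_abs x0).
by rewrite subrr !mul0r.
Qed.

End Homogeneous.

Section Ray.
Variables (R : realType) (dm : nat) (d e : 'rV[int]_dm) (q : nat).
Variable f : {mpoly (R[i])%C[dm]}.
Hypothesis q_ge1 : (1 <= q)%N.
Hypothesis prim_e : primitive e.
Hypothesis d_eq : d = e *+ q.
Local Notation vec := 'rV[int]_dm.

Lemma dZ : d = q%:Z *: e.
Proof. by rewrite d_eq -scaler_nat natz. Qed.

Lemma dE k : ((d 0 k)%:~R : R) = (e 0 k)%:~R * q%:R.
Proof. by rewrite d_eq -scaler_nat mxE rmorphM /= mulrC rmorph_nat. Qed.

Lemma q_gt0 : 0 < (q%:R : R).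
Proof. by rewrite ltr0n. Qed.

Lemma divqK (s : int) : (s%:~R / q%:R) * q%:R = s%:~R :> R.
Proof. by rewrite divfK // gt_eqF // q_gt0. Qed.

Definition rootZ (b : vec) (s : int) : bool := evalZ f (b + s *: e) == 0.

Lemma Tset_rootZ b t : Tset f d b t <-> exists s : int, t * q%:R = s%:~R /\ rootZ b s.
Proof.
split.
  case=> c [Hon Hv].
  have [z Hz] : exists z : int, t * q%:R = z%:~R.
    apply: (primitive_scale_int prim_e) => k; exists (c 0 k - b 0 k).
    by rewrite rmorphB /= (Hon k) dE; ring.
  exists z; split=> //; rewrite /rootZ.
  have -> : b + z *: e = c.
    apply/rowP => k; apply: (@intr_inj R).
    by rewrite !mxE rmorphD rmorphM /= (Hon k) dE -Hz; ring.
  exact/eqP.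
case=> s [Hs Zs]; exists (b + s *: e); split; last exact/eqP.
by move=> k; rewrite !mxE rmorphD rmorphM /= dE -Hs; ring.
Qed.

Lemma Tset_int b s : rootZ b s -> Tset f d b (s%:~R / q%:R).
Proof. by move=> Zs; apply/Tset_rootZ; exists s; rewrite divqK. Qed.

Lemma onLine_int b s : onLine b d ((s%:~R : R) / q%:R) (b + s *: e).
Proof.
move=> k; rewrite !mxE rmorphD rmorphM /= dE.
by rewrite mulrCA divqK mulrC.
Qed.

(* pval(b) = sg / q, measured in integer steps along e: s0 = val(b) q is the least
   root and sg the largest root below s0 + q. *)
Definition pval_step (b : vec) (sg : int) : Prop := exists s0 : int,
  [/\ rootZ b s0, forall s, rootZ b s -> s0 <= s, s0 <= sg < s0 + q%:Z, rootZ b sg &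
      forall s, rootZ b s -> s < s0 + q%:Z -> s <= sg].

Lemma pval_step_lt b sg s : pval_step b sg -> rootZ b s -> sg < s + q%:Z.
Proof. by case=> s0 [_ s0min /andP[_ sgs0] _ _] /s0min; lia. Qed.

Lemma pval_step_uniq b s1 s2 : pval_step b s1 -> pval_step b s2 -> s1 = s2.
Proof.
case=> a [Za mina /andP[_ s1a] Z1 max1].
case=> c [Zc minc /andP[_ s2c] Z2 max2].
have ac : a = c by apply/eqP; rewrite eq_le (mina _ Zc) (minc _ Za).
by subst c; apply/eqP; rewrite eq_le (max1 _ Z2 s2c) (max2 _ Z1 s1a).
Qed.

Lemma rootZ_shift b k s : rootZ (b + k *: e) s = rootZ b (s + k).
Proof. by rewrite /rootZ -addrA -scalerDl (addrC k). Qed.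

Lemma pval_step_shift b k sg : pval_step b sg -> pval_step (b + k *: e) (sg - k).
Proof.
case=> a [Za mina /andP[as1 s1a] Z1 max1].
exists (a - k); split.
- by rewrite rootZ_shift subrK.
- by move=> s; rewrite rootZ_shift => /mina; lia.
- by apply/andP; split; lia.
- by rewrite rootZ_shift subrK.
- move=> s; rewrite rootZ_shift => /max1 H sl.
  have : s + k <= sg by apply: H; lia.
  lia.
Qed.

Lemma exists_min_rootZ b z : val_gt_minf f d b -> rootZ b z ->
  exists2 s0, rootZ b s0 & forall s, rootZ b s -> s0 <= s.
Proof.
case=> lb Hlb Zz; apply: (@exists_int_min (rootZ b) (Num.floor (lb * q%:R)) z Zz).
move=> s Zs; have := Hlb _ (Tset_int Zs); rewrite -(ler_pM2r q_gt0) divqK => H.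
by rewrite -(ler_int R); apply: le_trans H; exact: floor_le.
Qed.

Lemma exists_pval_step b s0 : rootZ b s0 -> (forall s, rootZ b s -> s0 <= s) ->
  exists sg, pval_step b sg.
Proof.
move=> Zs0 s0min.
have [||sg /andP[Zsg sgq] sgmax] :=
  @exists_int_max (fun s => rootZ b s && (s < s0 + q%:Z)) (s0 + q%:Z) s0.
- by rewrite Zs0 /=; lia.
- by move=> s /andP[_ /ltW].
exists sg, s0; split=> //.
- by rewrite (s0min _ Zsg) sgq.
- by move=> s Zs ss0; apply: sgmax; rewrite Zs ss0.
Qed.

Lemma pval_is_step b p : pval_is f d b p -> exists sg, pval_step b sg /\ p * q%:R = sg%:~R.
Proof.
case=> v [[vlb vglb] /andP[_ pv1] Tp pmax].
have [sg [Hsg Zsg]] := (Tset_rootZ b p).1 Tp.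
have low s : rootZ b s -> sg - q%:Z < s.
  move=> Zs; have := vlb _ (Tset_int Zs); rewrite -(ler_pM2r q_gt0) divqK.
  rewrite -(ltr_pM2r q_gt0) mulrDl mul1r in pv1.
  rewrite -(ltr_int R) rmorphB /= -Hsg; lra.
have [|s0 Zs0 s0min] := @exists_int_min (rootZ b) (sg - q%:Z + 1) sg Zsg.
  by move=> s /low; lia.
exists sg; split=> //; exists s0; split=> //.
- by rewrite (s0min _ Zsg) /=; have := low _ Zs0; lia.
- move=> s Zs sl.
  have v0 : s0%:~R / q%:R <= v.
    apply: vglb => t /Tset_rootZ [s' [Hs' Zs']].
    by rewrite -(ler_pM2r q_gt0) divqK Hs' ler_int; apply: s0min.
  have Ts := Tset_int Zs.
  have Hlt : s%:~R / q%:R < v + 1.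
    rewrite -(ler_pM2r q_gt0) divqK in v0.
    have sl' : (s%:~R : R) < s0%:~R + q%:R.
      by rewrite -[q%:R]/((q%:Z)%:~R : R) -rmorphD ltr_int.
    rewrite -(ltr_pM2r q_gt0) divqK mulrDl mul1r; lra.
  have := pmax _ Ts; rewrite (vlb _ Ts) Hlt => /(_ isT).
  by rewrite -(ler_pM2r q_gt0) divqK Hsg ler_int.
Qed.

Lemma pval_step_is b sg : pval_step b sg -> pval_is f d b (sg%:~R / q%:R).
Proof.
case=> s0 [Z0 min0 /andP[s0s ss0] Zsg smax].
exists (s0%:~R / q%:R); split.
- split; last by move=> lb; apply; exact: Tset_int Z0.
  move=> t /Tset_rootZ [s [Hs Zs]].
  by rewrite -(ler_pM2r q_gt0) divqK Hs ler_int; apply: min0.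
- apply/andP; split; first by rewrite -(ler_pM2r q_gt0) !divqK ler_int.
  rewrite -(ltr_pM2r q_gt0) mulrDl mul1r !divqK.
  by rewrite -[q%:R]/((q%:Z)%:~R : R) -rmorphD ltr_int ss0.
- exact: Tset_int.
- move=> t /Tset_rootZ [s [Hs Zs]] /andP[_ Ht].
  rewrite -(ler_pM2r q_gt0) divqK Hs ler_int; apply: smax => //.
  rewrite -(ltr_pM2r q_gt0) mulrDl mul1r divqK Hs in Ht.
  by rewrite -(ltr_int R) rmorphD.
Qed.

Variables (n : nat) (h : 'I_n -> vec) (B : ('I_n -> nat) -> Prop).
Hypothesis facets : facet_data h.
Hypothesis homog_f : homog_op h d f.
Hypothesis mdS : inS h (- d).
Hypothesis compat : compatible h d B.

Lemma hv_e_le0 i : hv (h i) e <= 0.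
Proof. by have := mdS i; rewrite dZ hvN hvZ; nia. Qed.

Lemma exists_hv_e_lt0 : exists i, hv (h i) e < 0.
Proof.
have [/existsP //|/existsPn H] := boolP [exists i, hv (h i) e < 0].
case: prim_e => /eqP enz _; exfalso; apply: enz.
case: facets => _ _ convex _; apply: convex => i.
by have := H i; have := hv_e_le0 i; lia.
Qed.

Lemma inWB_S b : inWB h B b -> inS h b.
Proof. by case=> beta [_ []]. Qed.

Lemma inW_addS beta b s : inW h beta b -> inS h s -> inW h beta (b + s).
Proof.
move=> [Sb Wb] Ss; split; first exact: inS_add.
by move=> i; rewrite hvD; have := Wb i; have := Ss i; lia.
Qed.

Lemma inW_shift beta b s :
  B beta -> inW h beta b -> inS h (b + s *: e) -> inW h beta (b + s *: e).
Proof.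
move=> Bb [_ Wb] Sbs; split=> // i.
case: (compat Bb i) => [-> | ]; first exact: Sbs.
rewrite dZ hvZ => /eqP; rewrite mulf_eq0 => /orP[|/eqP he0]; first by lia.
by rewrite hvD hvZ he0 mulr0 addr0.
Qed.

Lemma exists_S_frontier b : inS h b ->
  exists m : int, (forall s, s <= m -> inS h (b + s *: e)) /\ rootZ b (m - q%:Z + 1).
Proof.
move=> Sb; have [i0 hi0] := exists_hv_e_lt0.
pose inSe s := (0 <= s) && [forall i, 0 <= hv (h i) (b + s *: e)].
have [||m /andP[m0 /forallP Sm] mmax] := @exists_int_max inSe `|hv (h i0) b|%:Z 0.
- by rewrite /inSe lexx; apply/forallP => i; rewrite scale0r addr0; exact: Sb.
- by move=> s /andP[s0 /forallP/(_ i0)]; rewrite hvD hvZ; nia.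
have Sbs s : s <= m -> inS h (b + s *: e).
  by move=> sm i; have := Sm i; rewrite !hvD !hvZ; have := hv_e_le0 i; nia.
exists m; split=> //; apply/eqP/(homog_op_eval_eq0 homog_f); first by apply: Sbs; lia.
have : ~~ inSe (m + 1) by apply/negP => /mmax; lia.
have m1 : 0 <= m + 1 by lia.
rewrite /inSe m1 /= => /forallPn [i Hi]; exists i.
have -> : b + (m - q%:Z + 1) *: e + d = b + (m + 1) *: e.
  by rewrite dZ -addrA -scalerDl; congr (_ + _ *: _); lia.
by rewrite ltNge.
Qed.

Definition vpt_gens (a : vec) : Prop := inVp f d a /\ inWB h B a.

Hypothesis val_bounded : forall a, inWB h B a -> val_gt_minf f d a.
Hypothesis vpt_roots : forall a, inVp f d a -> inWB h B a ->
  forall i : nat, (i < q)%N -> Vmon f (a - e *+ i).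

Lemma exists_vpt b : inWB h B b -> exists sg, pval_step b sg /\ vpt_gens (b + sg *: e).
Proof.
move=> Wb; case: (Wb) => beta [Bb Wbeta].
have [m [Sm Zm]] := exists_S_frontier Wbeta.1.
have [s0 Zs0 s0min] := exists_min_rootZ (val_bounded Wb) Zm.
have [sg pv] := exists_pval_step Zs0 s0min.
exists sg; split=> //; split.
  by exists b, (sg%:~R / q%:R); split; [exact: pval_step_is | exact: onLine_int].
exists beta; split=> //; apply: inW_shift => //; apply: Sm.
by have := pval_step_lt pv Zm; lia.
Qed.

Lemma vpt_rootZ b sg :
  vpt_gens (b + sg *: e) -> forall s, sg - q%:Z < s -> s <= sg -> rootZ b s.
Proof.
case=> Vb Wb s s1 s2.
have Hi : (`|sg - s|%N < q)%N by lia.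
have := vpt_roots Vb Wb Hi; rewrite /Vmon => H.
apply/eqP; rewrite -H; congr (evalZ f _).
rewrite -scaler_nat natz -addrA -scalerBl; congr (_ + _ *: _); lia.
Qed.

Definition nonneg_pval (b : vec) : Prop :=
  inWB h B b /\ exists p : R, pval_is f d b p /\ 0 <= p.

Lemma nonneg_pvalE b sg : inWB h B b -> pval_step b sg -> nonneg_pval b <-> 0 <= sg.
Proof.
move=> Wb pv; split.
  case=> _ [p [/pval_is_step [sg' [pv' Hs]] p0]].
  rewrite (pval_step_uniq pv pv') -(ler0z R) -Hs.
  by rewrite mulr_ge0 // ltW // q_gt0.
move=> sg0; split=> //; exists (sg%:~R / q%:R); split; first exact: pval_step_is.
by rewrite divr_ge0 ?ler0z // ltW // q_gt0.
Qed.

Lemma vpt_nonneg_pval g : vpt_gens g -> nonneg_pval g.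
Proof.
case=> [[a [p [Hp Hon]]] Wg]; have [sg [pv Hs]] := pval_is_step Hp.
have ga : g = a + sg *: e.
  apply/rowP => k; apply: (@intr_inj R).
  by rewrite !mxE rmorphD rmorphM /= (Hon k) dE (mulrC (e 0 k)%:~R) mulrA Hs.
have := pval_step_shift sg pv; rewrite subrr -ga => pv0.
exact/(nonneg_pvalE Wg pv0).
Qed.

Hypothesis vpt_separated : forall a b, inVp f d a -> inWB h B a -> inVp f d b -> inWB h B b ->
  ~ inSminus h e (a - b).

Lemma nonneg_pval_addS b s : nonneg_pval b -> inS h s -> nonneg_pval (b + s).
Proof.
move=> Pb Ss; have Wb := Pb.1.
have [sg [pv Gb]] := exists_vpt Wb.
have sg0 := (nonneg_pvalE Wb pv).1 Pb.
have Wbs : inWB h B (b + s).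
  by case: Wb => beta [Bb Wb]; exists beta; split => //; apply: inW_addS.
have [sg' [pv' Gb']] := exists_vpt Wbs.
apply/(nonneg_pvalE Wbs pv'); rewrite leNgt; apply/negP => neg.
apply: (vpt_separated Gb'.1 Gb'.2 Gb.1 Gb.2).
(* The difference of the two vertices is s + (sg - sg' - 1) (-e) - e, and -e lies in S. *)
exists (s + (sg - sg' - 1) *: (- e)); split.
  by move=> i; rewrite hvD hvZ hvN; have := Ss i; have := hv_e_le0 i; nia.
by apply/rowP => k; rewrite !mxE; ring.
Qed.

Lemma multiple_vptP b : multiple_of h vpt_gens b <-> nonneg_pval b.
Proof.
split.
  case=> g [Gg Sbg]; have -> : b = g + (b - g) by rewrite addrC subrK.
  exact: nonneg_pval_addS (vpt_nonneg_pval Gg) Sbg.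
move=> Pb; have [sg [pv Gb]] := exists_vpt Pb.1.
have sg0 := (nonneg_pvalE Pb.1 pv).1 Pb.
exists (b + sg *: e); split=> // i.
by rewrite hvB hvD hvZ; have := hv_e_le0 i; nia.
Qed.

Lemma multiple_addd a :
  multiple_of h vpt_gens a -> evalZ f a != 0 -> multiple_of h vpt_gens (a + d).
Proof.
move=> /multiple_vptP Pa fa; have Wa := Pa.1.
have [sg [pv Ga]] := exists_vpt Wa.
have sg0 := (nonneg_pvalE Wa pv).1 Pa.
have sgq : q%:Z <= sg.
  rewrite leNgt; apply/negP => lt.
  have : rootZ a 0 by apply: (vpt_rootZ Ga); lia.
  by rewrite /rootZ scale0r addr0 (negbTE fa).
have Sad : inS h (a + d).
  move=> i; rewrite leNgt; apply/negP => neg; move/eqP: fa; apply.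
  by apply: (homog_op_eval_eq0 homog_f (inWB_S Wa)); exists i.
have Wad : inWB h B (a + d).
  case: Wa => beta [Bb Wb]; exists beta; split=> //.
  by rewrite dZ; apply: inW_shift => //; rewrite -dZ.
have pvd : pval_step (a + d) (sg - q%:Z) by rewrite dZ; exact: pval_step_shift.
apply/multiple_vptP/(nonneg_pvalE Wad pvd); lia.
Qed.

Lemma multiple_subd b : multiple_of h vpt_gens b ->
  evalZ f (b - d) != 0 /\ multiple_of h vpt_gens (b - d).
Proof.
move=> Mb; split; last first.
  case: Mb => g [Gg Sbg]; exists g; split=> //.
  by rewrite addrAC; exact: inS_add.
have /multiple_vptP Pb := Mb; have [sg [pv _]] := exists_vpt Pb.1.
have sg0 := (nonneg_pvalE Pb.1 pv).1 Pb.
have := pval_step_shift (- q%:Z) pv; rewrite scaleNr -dZ => pvd.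
apply/negP => /eqP fz.
have : rootZ (b - d) 0 by rewrite /rootZ scale0r addr0 fz.
by move/(pval_step_lt pvd); lia.
Qed.

End Ray.

Theorem mainTheorem7 (R : realType) (dm n : nat)
  (h : 'I_n -> 'rV[int]_dm) (d e : 'rV[int]_dm) (q : nat)
  (f : {mpoly (R[i])%C[dm]}) (B : ('I_n -> nat) -> Prop) :
  (0 < dm)%N ->
  facet_data h ->
  homog_op h d f ->
  d != 0 ->
  inS h (- d) ->
  (1 <= q)%N -> primitive e -> d = e *+ q ->
  compatible h d B ->
  (forall a, inWB h B a -> val_gt_minf f d a) ->
  (forall a, inVp f d a -> inWB h B a ->
     forall i : nat, (i < q)%N -> Vmon f (a - e *+ i)) ->
  (forall a b, inVp f d a -> inWB h B a -> inVp f d b -> inWB h B b ->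
     ~ inSminus h e (a - b)) ->
  let G := fun a => inVp f d a /\ inWB h B a in
  delta_fixed h f d G /\
  (forall b, inExp R h G b <-> (inWB h B b /\ exists p : R, pval_is f d b p /\ 0 <= p)).
Proof.
move=> _ facets homog_f _ mdS q_ge1 prim_e d_eq compat val_bounded vpt_roots vpt_sep G.
split.
  apply: delta_fixed_shift => [a|b].
    exact: (multiple_addd q_ge1 prim_e d_eq facets homog_f mdS compat
              val_bounded vpt_roots vpt_sep).
  exact: (multiple_subd q_ge1 prim_e d_eq facets homog_f mdS compat val_bounded vpt_sep).
move=> b; apply: iff_trans (inExpP R b _) _; first by move=> g [_ /inWB_S].
exact: (multiple_vptP q_ge1 prim_e d_eq facets homog_f mdS compat val_bounded vpt_sep).
Qed.
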